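(* Let $\{Y_k\}$ be a fourth-order stationary sequence with $EY_k=0$, autocovariances $\gamma_j=\mathrm{Cov}(Y_0,Y_j)$ and cumulants $\kappa(h,r,s)$, satisfying: (a) $n^{-1/2}\sum_{1\le j\le nt}Y_j\xrightarrow{d}\sigma W(t)$ in $D[0,1]$ for some $\sigma>0$; (b) $\sum_j|\gamma_j|<\infty$; (c) $\sup_h\sum_{r,s}|\kappa(h,r,s)|<\infty$. For each $n$ let $X_i=\mu+Y_i$ for $1\le i\le k^*$ and $X_i=\mu+\Delta+Y_i$ for $k^*<i\le n$, where $k^*=[n\theta]$ for some $0<\theta<1$, and $\Delta=\Delta(n)$ satisfies $n\Delta^2\to\infty$, $\Delta^2|\hat k-k^*|=O_P(1)$ and $q(n)\Delta^2=O(1)$. Suppose $q(n)\to\infty$ and $q(n)/n\to0$. Then $s_n^2=O_P(1)$.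
   Context: Fourth-order stationary means finite fourth moments and shift-invariant joint moments of order at most four; $\kappa(h,r,s)=E[Y_kY_{k+h}Y_{k+r}Y_{k+s}]-(\gamma_h\gamma_{r-s}+\gamma_r\gamma_{h-s}+\gamma_s\gamma_{h-r})$. $q(n)$ is a sequence of positive integers, $\omega_j(q)=1-j/(q+1)$, $\bar X_n=\frac1n\sum_{i\le n}X_i$, $\hat\gamma_j=\frac1n\sum_{1\le i\le n-j}(X_i-\bar X_n)(X_{i+j}-\bar X_n)$, $s_n^2=\hat\gamma_0+2\sum_{1\le j\le q(n)}\omega_j(q(n))\hat\gamma_j$; $\hat k=\min\{k:\max_{1\le i\le n}|\sum_{j\le i}X_j-\frac in\sum_{j\le n}X_j|=|\sum_{j\le k}X_j-\frac kn\sum_{j\le n}X_j|\}$. *)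

From HB Require Import structures.
From mathcomp Require Import all_boot all_order all_algebra.
From mathcomp Require Import all_classical all_reals all_analysis.
Set Implicit Arguments. Unset Strict Implicit. Unset Printing Implicit Defensive.
Import Order.TTheory GRing.Theory Num.Theory.
Import numFieldNormedType.Exports.
Local Open Scope classical_set_scope.
Local Open Scope ring_scope.

Definition Ex {d} {T : measurableType d} {R : realType} (P : probability T R)
  (X : T -> R) : R := fine ('E_P[X])%E.

Definition fourth_order_stationary {d} {T : measurableType d} {R : realType}
  (P : probability T R) (Y : nat -> T -> R) : Prop :=
  [/\ (forall k, measurable_fun setT (Y k)),
      (forall k, P.-integrable setT (fun w => (Y k w ^+ 4)%:E)) &
   [/\ (forall k a, Ex P (Y (k + a)%N) = Ex P (Y a)),
      (forall k a b, Ex P (fun w => Y (k + a)%N w * Y (k + b)%N w)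
                     = Ex P (fun w => Y a w * Y b w)),
      (forall k a b c, Ex P (fun w => Y (k + a)%N w * Y (k + b)%N w * Y (k + c)%N w)
                     = Ex P (fun w => Y a w * Y b w * Y c w)) &
      (forall k a b c e,
         Ex P (fun w => Y (k + a)%N w * Y (k + b)%N w * Y (k + c)%N w * Y (k + e)%N w)
         = Ex P (fun w => Y a w * Y b w * Y c w * Y e w))]].

Definition cov {d} {T : measurableType d} {R : realType} (P : probability T R)
  (U V : T -> R) : R :=
  Ex P (fun w => (U w - Ex P U) * (V w - Ex P V)).

(** gamma_j = Cov(Y_0, Y_j) for j : int; for j < 0 this is, by stationarity,
    Cov(Y_{-j}, Y_0) = Cov(Y_0, Y_{|j|}). *)
Definition acov {d} {T : measurableType d} {R : realType} (P : probability T R)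
  (Y : nat -> T -> R) (j : int) : R := cov P (Y 0%N) (Y (absz j)).

(** kappa(h,r,s) = E[Y_k Y_{k+h} Y_{k+r} Y_{k+s}]
     - (g_h g_{r-s} + g_r g_{h-s} + g_s g_{h-r}),
    evaluated at the smallest admissible k = max(0,-h,-r,-s) (by stationarity
    any admissible k gives the same value). *)
Definition kappa {d} {T : measurableType d} {R : realType} (P : probability T R)
  (Y : nat -> T -> R) (h r s : int) : R :=
  let k0 : int := Num.max 0 (Num.max (- h) (Num.max (- r) (- s))) in
  Ex P (fun w => Y (absz k0) w * Y (absz (k0 + h)) w * Y (absz (k0 + r)) w
                 * Y (absz (k0 + s)) w)
  - (acov P Y h * acov P Y (r - s) + acov P Y r * acov P Y (h - s)
     + acov P Y s * acov P Y (h - r)).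

(** Paths are functions R -> R, only their restriction to [0,1] matters. *)
Definition cadlag {R : realType} (x : R -> R) : Prop :=
  (forall t, 0 <= t -> t < 1 -> x @ t^'+ --> x t) /\
  (forall t, 0 < t -> t <= 1 -> cvg (x @ t^'-)).

Definition time_change {R : realType} (lam : R -> R) : Prop :=
  [/\ (forall s t, 0 <= s -> s < t -> t <= 1 -> lam s < lam t),
      {within `[0, 1]%classic, continuous lam}, lam 0 = 0 & lam 1 = 1].

(** [skorokhod_close x y delta] : some time change lam satisfies
    sup_t |lam t - t| <= delta and sup_t |x t - y (lam t)| <= delta, i.e. the
    Skorokhod (J1) distance satisfies d(x,y) <= delta up to arbitrarily small
    slack. *)
Definition skorokhod_close {R : realType} (x y : R -> R) (delta : R) : Prop :=
  exists lam, time_change lam /\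
    forall t, 0 <= t -> t <= 1 -> `|lam t - t| < delta /\ `|x t - y (lam t)| < delta.

Definition skorokhod_continuous {R : realType} (f : (R -> R) -> R) : Prop :=
  forall x, cadlag x -> forall eps, 0 < eps -> exists2 delta, 0 < delta &
    forall y, cadlag y -> skorokhod_close x y delta -> `|f x - f y| < eps.

Definition bounded_on_D {R : realType} (f : (R -> R) -> R) : Prop :=
  exists M, forall x, cadlag x -> `|f x| <= M.

Definition brownian_motion {d'} {Om : measurableType d'} {R : realType}
  (Q : probability Om R) (W : R -> Om -> R) : Prop :=
  [/\ (forall t, measurable_fun setT (W t)),
      (forall w, W 0 w = 0),
      (forall w, {within `[0, 1]%classic, continuous (fun t => W t w)}),
      (forall s t, 0 <= s -> s < t -> t <= 1 -> forall A : set R, measurable A ->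
         Q [set w | A (W t w - W s w)] = normal_prob 0 (Num.sqrt (t - s)) A) &
      (forall (m : nat) (tt : nat -> R), 0 <= tt 0%N ->
         (forall i, (i < m)%N -> tt i < tt i.+1) -> tt m <= 1 ->
         forall A : nat -> set R, (forall i, measurable (A i)) ->
         Q (\bigcap_(i in `I_m) [set w | A i (W (tt i.+1) w - W (tt i) w)])
         = (\prod_(i < m) Q [set w | A i (W (tt i.+1) w - W (tt i) w)%R])%E)].

Definition psum_proc {T : Type} {R : realType} (Y : nat -> T -> R) (n : nat)
  (w : T) (t : R) : R :=
  (Num.sqrt n%:R)^-1 * \sum_(1 <= j < (Num.truncn (n%:R * t)).+1) Y j w.

Definition fclt {d} {T : measurableType d} {R : realType} (P : probability T R)
  (Y : nat -> T -> R) : Prop :=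
  exists2 sigma : R, 0 < sigma &
  exists (d' : measure_display) (Om : measurableType d') (Q : probability Om R)
         (W : R -> Om -> R),
    brownian_motion Q W /\
    forall f : (R -> R) -> R, skorokhod_continuous f -> bounded_on_D f ->
      (fun n => Ex P (fun w => f (psum_proc Y n w))) @ \oo -->
        Ex Q (fun w => f (fun t => sigma * W t w)).

Definition bounded_in_prob {d} {T : measurableType d} {R : realType}
  (P : probability T R) (Z : nat -> T -> R) : Prop :=
  forall eps : R, 0 < eps -> exists M : R, exists N : nat,
    forall n, (N <= n)%N -> (P [set w | (M < `|Z n w|)%R] < eps%:E)%E.

Definition kstar {R : realType} (theta : R) (n : nat) : nat :=
  Num.truncn (n%:R * theta).

Definition Xcp {T : Type} {R : realType} (mu : R) (Delta : nat -> R) (theta : R)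
  (Y : nat -> T -> R) (n i : nat) (w : T) : R :=
  if (i <= kstar theta n)%N then mu + Y i w else mu + Delta n + Y i w.

Definition Xbar {T : Type} {R : realType} (X : nat -> nat -> T -> R) (n : nat)
  (w : T) : R := n%:R^-1 * \sum_(1 <= i < n.+1) X n i w.

Definition gammahat {T : Type} {R : realType} (X : nat -> nat -> T -> R)
  (n j : nat) (w : T) : R :=
  n%:R^-1 * \sum_(1 <= i < (n - j).+1)
              (X n i w - Xbar X n w) * (X n (i + j)%N w - Xbar X n w).

Definition bartlett {R : realType} (q j : nat) : R := 1 - j%:R / (q.+1)%:R.

Definition s2 {T : Type} {R : realType} (X : nat -> nat -> T -> R)
  (q : nat -> nat) (n : nat) (w : T) : R :=
  gammahat X n 0 w
  + 2 * \sum_(1 <= j < (q n).+1) bartlett (q n) j * gammahat X n j w.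

Definition cusum {T : Type} {R : realType} (X : nat -> nat -> T -> R)
  (n i : nat) (w : T) : R :=
  `|\sum_(1 <= j < i.+1) X n j w - i%:R / n%:R * \sum_(1 <= j < n.+1) X n j w|.

Definition khat {T : Type} {R : realType} (X : nat -> nat -> T -> R)
  (n : nat) (w : T) : nat :=
  let M := \big[Num.max/0]_(1 <= i < n.+1) cusum X n i w in
  (find (fun k => cusum X n k w == M) (iota 1 n)).+1.

From HB Require Import structures.
From mathcomp Require Import all_boot all_order all_algebra.
From mathcomp Require Import all_classical all_reals all_analysis.
From mathcomp Require Import measurable_realfun ring lra zify.
Set Implicit Arguments. Unset Strict Implicit. Unset Printing Implicit Defensive.
Import Order.TTheory GRing.Theory Num.Theory.
Import numFieldNormedType.Exports.
Local Open Scope classical_set_scope.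
Local Open Scope ring_scope.

(* With u_i = X_i - Xbar padded by zeros, the Bartlett estimator is a sum of squared
   window sums: s_n^2 = (n (q+1))^-1 sum_m (u_(m-q) + ... + u_m)^2.  Hence it is
   nonnegative, and replacing u_i by Y_i moves each window sum by at most
   (q+1)(|Ybar| + 2|Delta|); this bounds s_n^2 by a nonnegative Z_n plus
   64 q Delta^2 = O(1).  Summable autocovariances give
   E[(sum of k distinct Y_i)^2] <= k sum_j |gamma_j|, so E[Z_n] <= 20 sum_j |gamma_j|
   once q <= n, and Markov's inequality concludes.  Only (b), q Delta^2 = O(1) and
   q/n -> 0 are used. *)

Section lag_products.
Variable R : comPzRingType.
Implicit Types (g z u : nat -> R).

Definition lag_prod z (K j : nat) : R := \sum_(0 <= k < K) z k * z (k + j)%N.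

Definition window_sum z (q m : nat) : R := \sum_(0 <= a < q.+1) z (m + a)%N.

Lemma sum_shift_vanishing g (K a : nat) :
  (forall k, (k < a)%N -> g k = 0) -> (forall k, (K <= k)%N -> g k = 0) ->
  \sum_(0 <= m < K) g (m + a)%N = \sum_(0 <= k < K) g k.
Proof.
move=> g_lt g_ge.
rewrite -[K in LHS](addnK a) -(big_addn _ _ _ xpredT).
transitivity (\sum_(0 <= k < K + a) g k).
  rewrite [RHS](big_cat_nat (n := a)) ?leq_addl //= [X in _ = X + _]big1_seq ?add0r // => k.
  by rewrite mem_index_iota => /andP[_ /andP[_ /g_lt]].
rewrite (big_cat_nat (n := K)) ?leq_addr //= [X in _ + X]big1_seq ?addr0 // => k.
by rewrite mem_index_iota => /andP[_ /andP[Kk _]]; exact: g_ge.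
Qed.

Section vanishing.
Variables (z : nat -> R) (K Q : nat).
Hypotheses (z_lt : forall k, (k < Q)%N -> z k = 0) (z_ge : forall k, (K <= k)%N -> z k = 0).

Lemma lag_prod_shift (a j : nat) : (a <= Q)%N ->
  \sum_(0 <= m < K) z (m + a)%N * z (m + a + j)%N = lag_prod z K j.
Proof.
move=> aQ; apply: (sum_shift_vanishing (g := fun k => z k * z (k + j)%N)) => k hk.
  by rewrite z_lt ?mul0r // (leq_trans hk aQ).
by rewrite z_ge ?mul0r.
Qed.

Lemma window_sum_mul_next (q : nat) : (q < Q)%N ->
  \sum_(0 <= m < K) window_sum z q m * z (m + q.+1)%N =
  \sum_(1 <= j < q.+2) lag_prod z K j.
Proof.
move=> qQ; under eq_bigr do rewrite /window_sum big_distrl /=.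
rewrite exchange_big /= big_nat_rev big_add1 /=.
apply: eq_big_nat => a /andP[_ aq].
rewrite -(@lag_prod_shift (0 + q.+1 - a.+1)) ?(leq_trans (leq_subr _ _) (ltnW qQ)) //.
by apply: eq_bigr => m _; congr (_ * z _); lia.
Qed.

(* Expanding the squares, [z k * z (k + j)] occurs in exactly [q + 1 - j] windows. *)
Lemma sum_sqr_window_sum (q : nat) : (q <= Q)%N ->
  \sum_(0 <= m < K) window_sum z q m ^+ 2 =
  (q.+1)%:R * lag_prod z K 0 + 2 * \sum_(1 <= j < q.+1) ((q.+1)%:R - j%:R) * lag_prod z K j.
Proof.
elim: q => [_|q IH qQ].
  rewrite [X in 2 * X]big_geq // mulr0 addr0 mul1r; apply: eq_bigr => m _.
  by rewrite /window_sum big_nat1 expr2 !addn0.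
have next_sq : \sum_(0 <= m < K) z (m + q.+1)%N ^+ 2 = lag_prod z K 0.
  by rewrite -(lag_prod_shift 0 qQ); apply: eq_bigr => m _; rewrite addn0 expr2.
have drop_last : \sum_(1 <= j < q.+1) ((q.+1)%:R - j%:R) * lag_prod z K j =
                 \sum_(1 <= j < q.+2) ((q.+1)%:R - j%:R) * lag_prod z K j.
  by rewrite [RHS]big_nat_recr //= subrr mul0r addr0.
have window_sumS m : window_sum z q.+1 m = window_sum z q m + z (m + q.+1)%N.
  by rewrite /window_sum big_nat_recr.
under eq_bigr do rewrite window_sumS sqrrD -mulr_natr.
rewrite !big_split /= IH ?(ltnW qQ) // -big_distrl /= window_sum_mul_next // next_sq.
have -> : \sum_(1 <= j < q.+2) ((q.+2)%:R - j%:R) * lag_prod z K j =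
          \sum_(1 <= j < q.+2) ((q.+1)%:R - j%:R) * lag_prod z K j +
          \sum_(1 <= j < q.+2) lag_prod z K j.
  by rewrite -big_split /=; apply: eq_bigr => j _; rewrite -[(q.+2)%:R]natr1; ring.
rewrite drop_last -[(q.+2)%:R]natr1; ring.
Qed.
End vanishing.

Definition zero_pad u (n Q k : nat) : R :=
  if (Q <= k < Q + n)%N then u (k.+1 - Q)%N else 0.

Lemma lag_prod_zero_pad u (n Q j : nat) :
  lag_prod (zero_pad u n Q) (n + Q) j = \sum_(1 <= i < (n - j).+1) u i * u (i + j)%N.
Proof.
rewrite /lag_prod -(sum_shift_vanishing
  (g := fun k => zero_pad u n Q k * zero_pad u n Q (k + j)) (a := Q)); first last.
- by move=> k hk; rewrite /zero_pad ifF ?mul0r //; lia.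
- by move=> k hk; rewrite /zero_pad ifF ?mul0r //; lia.
rewrite [RHS]big_add1 /=.
rewrite (big_cat_nat (n := n - j)) ?leq_subr ?(leq_trans (leq_subr _ _) (leq_addr _ _)) //=.
rewrite [X in _ + X]big1_seq ?addr0 => [|m]; last first.
  rewrite mem_index_iota => /andP[_ /andP[hm _]].
  by rewrite /zero_pad [X in _ * X]ifF ?mulr0 //; lia.
apply: eq_big_nat => m /andP[_ hm].
by rewrite /zero_pad !ifT; [congr (u _ * u _); lia | lia | lia].
Qed.

Definition window_support (n Q m : nat) : seq nat :=
  [seq ((m + a).+1 - Q)%N | a <- index_iota 0 Q.+1 & (Q <= m + a < Q + n)%N].

Lemma window_sum_zero_pad u (n Q m : nat) :
  window_sum (zero_pad u n Q) Q m = \sum_(i <- window_support n Q m) u i.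
Proof. by rewrite big_map big_filter big_mkcond. Qed.

Lemma window_support_uniq (n Q m : nat) : uniq (window_support n Q m).
Proof.
rewrite map_inj_in_uniq ?filter_uniq ?iota_uniq // => a b.
by rewrite !mem_filter => /andP[/andP[? _] _] /andP[/andP[? _] _]; lia.
Qed.

Lemma size_window_support (n Q m : nat) : (size (window_support n Q m) <= Q.+1)%N.
Proof. by rewrite size_map size_filter (leq_trans (count_size _ _)) // size_iota. Qed.

End lag_products.

Lemma window_sum_zero_pad_dist (R : numDomainType) (u v : nat -> R) (n Q m : nat) (K : R) :
  (forall i, `|u i - v i| <= K) ->
  `|window_sum (zero_pad u n Q) Q m - window_sum (zero_pad v n Q) Q m| <= (Q.+1)%:R * K.
Proof.
move=> uv; have K_ge0 : 0 <= K := le_trans (normr_ge0 _) (uv 0%N).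
rewrite /window_sum -sumrB (le_trans (ler_norm_sum _ _ _)) //.
have -> : (Q.+1)%:R * K = \sum_(0 <= a < Q.+1) K by rewrite sumr_const_nat subn0 mulr_natl.
apply: ler_sum => a _.
by rewrite /zero_pad; case: ifP => _; rewrite ?subrr ?normr0.
Qed.

Lemma perturbation_term_le (R : realFieldType) (N Q y D : R) : 1 <= Q -> Q <= N -> 0 <= D ->
  (N * (Q + 1))^-1 * ((N + Q) * (2 * ((Q + 1) * (`|y| + 2 * D)) ^+ 2))
    <= 8 * (Q + 1) * y ^+ 2 + 64 * (Q * D ^+ 2).
Proof.
move=> Q_ge1 QN D_ge0.
have NQ_gt0 : 0 < N * (Q + 1) by rewrite mulr_gt0 //; lra.
rewrite ler_pdivrMl // exprMn.
have sqr_le : (`|y| + 2 * D) ^+ 2 <= 2 * y ^+ 2 + 8 * D ^+ 2.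
  by rewrite -(real_normK (num_real y)); have := sqr_ge0 (`|y| - 2 * D); nra.
set k := (`|y| + 2 * D) ^+ 2 in sqr_le *.
have Qk_ge0 : 0 <= (Q + 1) ^+ 2 * k by rewrite mulr_ge0 ?sqr_ge0.
have NQ_le : (N + Q) * (2 * ((Q + 1) ^+ 2 * k)) <= 2 * N * (2 * ((Q + 1) ^+ 2 * k)).
  by apply: ler_wpM2r; lra.
have Qk_le : N * ((Q + 1) ^+ 2 * k) <= N * ((Q + 1) ^+ 2 * (2 * y ^+ 2 + 8 * D ^+ 2)).
  by apply: ler_wpM2l; [lra | apply: ler_wpM2l; rewrite ?sqr_ge0].
have QD_le : N * (Q + 1) * (32 * (Q + 1) * D ^+ 2) <= N * (Q + 1) * (64 * (Q * D ^+ 2)).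
  by apply: ler_wpM2l; [exact: ltW | have := sqr_ge0 D; nra].
nra.
Qed.

Section bartlett_estimator.
Variables (R : realType) (T : Type).
Implicit Types (X : nat -> nat -> T -> R) (Y : nat -> T -> R).

Lemma s2_window_sum X (q : nat -> nat) (n : nat) (w : T) : (0 < n)%N ->
  s2 X q n w = (n%:R * (q n).+1%:R)^-1 *
    \sum_(0 <= m < n + q n)
      window_sum (zero_pad (fun i => X n i w - Xbar X n w) n (q n)) (q n) m ^+ 2.
Proof.
move=> n_gt0; set Q := q n; set u := fun i => X n i w - Xbar X n w.
have gammahatE j : gammahat X n j w = n%:R^-1 * lag_prod (zero_pad u n Q) (n + Q) j.
  by rewrite lag_prod_zero_pad.
rewrite (sum_sqr_window_sum (Q := Q)) //; first last.
- by move=> k hk; rewrite /zero_pad ifF //; lia.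
- by move=> k hk; rewrite /zero_pad ifF //; lia.
have n_neq0 : n%:R != 0 :> R by rewrite pnatr_eq0 -lt0n.
have Q1_neq0 : 1 + Q%:R != 0 :> R by rewrite addrC natr1 pnatr_eq0.
rewrite /s2 gammahatE mulrDr; congr (_ + _); first by field; rewrite Q1_neq0 n_neq0.
rewrite [RHS]mulrCA; congr (2 * _); rewrite big_distrr /=; apply: eq_bigr => j _.
by rewrite gammahatE /bartlett; field; rewrite Q1_neq0 n_neq0.
Qed.

Lemma centred_sub_le X Y (c D : R) (n : nat) (w : T) :
  (0 < n)%N -> (forall i, `|X n i w - c - Y i w| <= D) ->
  forall i, `|X n i w - Xbar X n w - Y i w| <= `|Xbar (fun=> Y) n w| + 2 * D.
Proof.
move=> n_gt0 XY i; set e := fun k => X n k w - c - Y k w.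
have n_neq0 : n%:R != 0 :> R by rewrite pnatr_eq0 -lt0n.
have mean_e : Xbar X n w - c - Xbar (fun=> Y) n w = n%:R^-1 * \sum_(1 <= k < n.+1) e k.
  rewrite /Xbar /e !sumrB sumr_const_nat subn1 /= -mulr_natr; by field.
have mean_e_le : `|n%:R^-1 * \sum_(1 <= k < n.+1) e k| <= D.
  rewrite normrM normfV normr_nat ler_pdivrMl ?ltr0n // (le_trans (ler_norm_sum _ _ _)) //.
  have -> : n%:R * D = \sum_(1 <= k < n.+1) D by rewrite sumr_const_nat subn1 mulr_natl.
  by apply: ler_sum => k _; exact: XY.
have -> : X n i w - Xbar X n w - Y i w =
          e i - (Xbar X n w - c - Xbar (fun=> Y) n w) - Xbar (fun=> Y) n w by rewrite /e; ring.
rewrite mean_e; have := XY i.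
have := ler_normB (e i - n%:R^-1 * \sum_(1 <= k < n.+1) e k) (Xbar (fun=> Y) n w).
have := ler_normB (e i) (n%:R^-1 * \sum_(1 <= k < n.+1) e k).
rewrite /e; lra.
Qed.

Definition s2_dominant Y (q : nat -> nat) (n : nat) (w : T) : R :=
  2 * ((n%:R * (q n).+1%:R)^-1 *
       \sum_(0 <= m < n + q n) window_sum (zero_pad (Y^~ w) n (q n)) (q n) m ^+ 2)
  + 8 * (q n).+1%:R * Xbar (fun=> Y) n w ^+ 2.

Lemma s2_le_dominant X Y (q : nat -> nat) (c D : R) (n : nat) (w : T) :
  (0 < q n <= n)%N -> (forall i, `|X n i w - c - Y i w| <= D) ->
  s2 X q n w <= s2_dominant Y q n w + 64 * ((q n)%:R * D ^+ 2).
Proof.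
case/andP=> Q_gt0 Qn XY; have n_gt0 : (0 < n)%N := leq_trans Q_gt0 Qn.
have D_ge0 : 0 <= D := le_trans (normr_ge0 _) (XY 0%N).
set Q := q n; set K := `|Xbar (fun=> Y) n w| + 2 * D.
set WX := fun m => window_sum (zero_pad (fun i => X n i w - Xbar X n w) n Q) Q m.
set WY := fun m => window_sum (zero_pad (Y^~ w) n Q) Q m.
have WX_le m : WX m ^+ 2 <= 2 * WY m ^+ 2 + 2 * ((Q.+1)%:R * K) ^+ 2.
  have := window_sum_zero_pad_dist n Q m (centred_sub_le n_gt0 XY).
  rewrite -/(WX m) -/(WY m) -/K => dist_le.
  have r_ge0 : 0 <= (Q.+1)%:R * K := le_trans (normr_ge0 _) dist_le.
  have : (WX m - WY m) ^+ 2 <= ((Q.+1)%:R * K) ^+ 2.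
    by rewrite -(real_normK (num_real (WX m - WY m))) lerXn2r // nnegrE.
  by have := sqr_ge0 (WX m - 2 * WY m); nra.
rewrite s2_window_sum // -/Q.
have c_ge0 : 0 <= (n%:R * Q.+1%:R)^-1 :> R by rewrite invr_ge0 mulr_ge0.
apply: (le_trans (ler_wpM2l c_ge0 (ler_sum _ (fun m _ => WX_le m)))).
rewrite big_split /= -big_distrr /= sumr_const_nat subn0 mulrDr /s2_dominant -/Q.
rewrite mulrCA -addrA lerD2l -[_ *+ (n + Q)]mulr_natl natrD -!(natr1 Q).
by apply: perturbation_term_le => //; rewrite ?ler1n ?ler_nat.
Qed.

Lemma s2_ge0 X (q : nat -> nat) (n : nat) (w : T) :
  (0 < n)%N -> 0 <= s2 X q n w.
Proof.
move=> n_gt0; rewrite s2_window_sum // mulr_ge0 ?invr_ge0 ?mulr_ge0 //.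
by apply: sumr_ge0 => m _; exact: sqr_ge0.
Qed.

Lemma s2_dominant_ge0 Y (q : nat -> nat) (n : nat) (w : T) :
  0 <= s2_dominant Y q n w.
Proof.
apply: addr_ge0; last by rewrite mulr_ge0 ?sqr_ge0.
rewrite !mulr_ge0 ?invr_ge0 ?mulr_ge0 //.
by apply: sumr_ge0 => m _; exact: sqr_ge0.
Qed.

End bartlett_estimator.

Section real_expectation.
Context d (T : measurableType d) (R : realType) (P : probability T R).
Local Notation P_integrable f := (P.-integrable setT (EFin \o f)).
Implicit Types f g : T -> R.

Lemma integral_Ex f : P_integrable f -> (\int[P]_w (f w)%:E)%E = (Ex P f)%:E.
Proof. by move=> intf; rewrite /Ex unlock fineK // integrable_fin_num. Qed.

Lemma P_integrableD f g : P_integrable f -> P_integrable g ->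
  P_integrable (fun w => f w + g w).
Proof. exact: integrableD. Qed.

Lemma P_integrableZ (k : R) f : P_integrable f -> P_integrable (fun w => k * f w).
Proof. exact: integrableZl. Qed.

Lemma P_integrable_sum (I : Type) (s : seq I) (F : I -> T -> R) :
  (forall i, P_integrable (F i)) -> P_integrable (fun w => \sum_(i <- s) F i w).
Proof.
move=> intF; have -> : EFin \o (fun w => \sum_(i <- s) F i w) =
                       (fun w => \sum_(i <- s) (F i w)%:E)%E.
  by apply/funext => w /=; rewrite sumEFin.
by apply: integrable_sum => // i _; exact: intF.
Qed.

Lemma ExD f g : P_integrable f -> P_integrable g ->
  Ex P (fun w => f w + g w) = Ex P f + Ex P g.
Proof.
move=> intf intg; apply: EFin_inj.
rewrite EFinD -!integral_Ex ?P_integrableD //.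
under eq_integral do rewrite EFinD.
exact: integralD.
Qed.

Lemma ExZ (k : R) f : P_integrable f -> Ex P (fun w => k * f w) = k * Ex P f.
Proof.
move=> intf; apply: EFin_inj.
by rewrite EFinM -!integral_Ex ?P_integrableZ // -integralZl.
Qed.

Lemma Ex_sum (I : Type) (s : seq I) (F : I -> T -> R) :
  (forall i, P_integrable (F i)) ->
  Ex P (fun w => \sum_(i <- s) F i w) = \sum_(i <- s) Ex P (F i).
Proof.
move=> intF; apply: EFin_inj.
rewrite -integral_Ex ?P_integrable_sum // -sumEFin.
under eq_integral do rewrite -sumEFin.
by rewrite integral_sum //; apply: eq_bigr => i _; rewrite integral_Ex.
Qed.

Lemma measurable_lt_fun f (a : R) : measurable_fun setT f -> measurable [set w | a < f w].
Proof. by move=> mf; rewrite -preimage_itvoy -[X in measurable X]setTI; exact: mf. Qed.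

Lemma Ex_markov f (t : R) : P_integrable f -> (forall w, 0 <= f w) -> 0 < t ->
  (P [set w | (t < f w)%R] <= (Ex P f / t)%:E)%E.
Proof.
move=> intf f_ge0 t_gt0; set A := [set w | t < f w].
have mA : measurable A.
  by apply: measurable_lt_fun; apply/measurable_EFinP; exact: measurable_int intf.
have tA_le : (t%:E * P A <= (Ex P f)%:E)%E.
  rewrite -integral_Ex // -[A in P A]setIT -integral_indic // -integralZl //;
    last exact: integrable_indic.
  apply: le_integral => //=; first exact/integrableZl/integrable_indic.
  move=> w _; rewrite -EFinM lee_fin /indic.
  by case: (boolP (w \in A)) => [/set_mem/ltW|_]; rewrite ?mulr1 ?mulr0.
rewrite -(fineK (fin_num_measure _ _ mA)) lee_fin ler_pdivlMr // mulrC.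
by rewrite -lee_fin EFinM fineK // fin_num_measure.
Qed.

Lemma bounded_in_prob_dominated (S Z : nat -> T -> R) (c B : R) :
  (forall n, measurable_fun setT (S n)) ->
  (forall n, P_integrable (Z n)) -> (forall n w, 0 <= Z n w) ->
  (\forall n \near \oo, Ex P (Z n) <= B /\ forall w, `|S n w| <= Z n w + c) ->
  bounded_in_prob P S.
Proof.
move=> mS intZ Z_ge0 [N _ SZ] eps eps_gt0.
set t := (`|B| + 1) / eps; have t_gt0 : 0 < t by rewrite divr_gt0 // ltr_pwDr.
exists (c + t), N => n Nn; have [EZ_le SZ_le] := SZ n Nn.
have mZ : measurable_fun setT (Z n).
  by apply/measurable_EFinP; exact: measurable_int (intZ n).
have sub : [set w | c + t < `|S n w|] `<=` [set w | t < Z n w].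
  by move=> w /=; have := SZ_le w; lra.
have mSn : measurable [set w | c + t < `|S n w|].
  by apply: measurable_lt_fun; exact: measurableT_comp (mS n).
have mZn : measurable [set w | t < Z n w] by exact: measurable_lt_fun.
apply: (le_lt_trans (le_measure _ (mem_set mSn) (mem_set mZn) sub)).
apply: (le_lt_trans (Ex_markov (intZ n) (Z_ge0 n) t_gt0)); rewrite lte_fin.
rewrite ltr_pdivrMr // /t mulrCA mulfV ?gt_eqF // mulr1.
by apply: (le_lt_trans EZ_le); rewrite (le_lt_trans (ler_norm B)) // ltrDl.
Qed.

End real_expectation.

Section summable_autocovariance.
Context d (T : measurableType d) (R : realType) (P : probability T R) (Y : nat -> T -> R).
Local Notation P_integrable f := (P.-integrable setT (EFin \o f)).
Hypotheses (Y_stat : fourth_order_stationary P Y) (Y_centred : forall k, Ex P (Y k) = 0).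
Hypothesis acov_summable : (\esum_(j in [set: int]) (`|acov P Y j|)%:E < +oo)%E.
Let G := fine (\esum_(j in [set: int]) (`|acov P Y j|)%:E)%E.

Let G_ge0 : 0 <= G.
Proof. exact/fine_ge0/esum_ge0. Qed.

Lemma P_integrable_mul (i j : nat) : P_integrable (fun w => Y i w * Y j w).
Proof.
have [mY intY4 _] := Y_stat.
have int_dom : P_integrable (fun w => Y i w ^+ 4 + Y j w ^+ 4 + 1).
  apply: P_integrableD; last exact: finite_measure_integrable_cst.
  by apply: P_integrableD; exact: intY4.
apply: (le_integrable measurableT _ _ int_dom).
  by apply/measurable_EFinP; exact: measurable_funM.
move=> w _ /=; rewrite lee_fin normrM.
set a := Y i w; set b := Y j w.
(* [|a b| <= (a^2 + b^2) / 2 <= a^4 + b^4 + 1] *)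
have a4 : a ^+ 4 = `|a| ^+ 4 by rewrite -normrX ger0_norm // exprn_even_ge0.
have b4 : b ^+ 4 = `|b| ^+ 4 by rewrite -normrX ger0_norm // exprn_even_ge0.
rewrite [X in _ <= X]ger0_norm; last by rewrite !addr_ge0 // exprn_even_ge0.
rewrite a4 b4; have := normr_ge0 a; have := normr_ge0 b.
have := sqr_ge0 (`|a| - `|b|); have := sqr_ge0 (`|a| ^+ 2 - 1); have := sqr_ge0 (`|b| ^+ 2 - 1).
nra.
Qed.

Lemma Ex_mul_acov (i l : nat) : Ex P (fun w => Y i w * Y l w) = acov P Y (l%:Z - i%:Z).
Proof.
have [_ _ [_ stat2 _ _]] := Y_stat.
rewrite /acov /cov !Y_centred.
under [in RHS]eq_fun do rewrite !subr0.
wlog il : i l / (i <= l)%N => [hwlog|].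
  have [|li] := leqP i l; first exact: hwlog.
  rewrite -abszN opprB.
  under eq_fun do rewrite mulrC.
  exact/hwlog/ltnW.
by rewrite subzn // -(stat2 i 0%N (l - i)%N) addn0 subnKC.
Qed.

Lemma sum_abs_acov_le (s : seq int) : uniq s -> \sum_(j <- s) `|acov P Y j| <= G.
Proof.
move=> s_uniq.
have G_fin : (\esum_(j in [set: int]) (`|acov P Y j|)%:E)%E \is a fin_num.
  by rewrite ge0_fin_numE // esum_ge0.
rewrite -lee_fin /G fineK //; apply: esum_ge; exists [set` s]; first by split => //; exact: finite_seq.
by rewrite -fsbig_seq // sumEFin.
Qed.

Lemma P_integrable_sqr_sum (s : seq nat) : P_integrable (fun w => (\sum_(i <- s) Y i w) ^+ 2).
Proof.
under eq_fun do rewrite expr2 big_distrlr /=.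
by apply: P_integrable_sum => i; apply: P_integrable_sum => j; exact: P_integrable_mul.
Qed.

Lemma Ex_sqr_sum_le (s : seq nat) : uniq s ->
  Ex P (fun w => (\sum_(i <- s) Y i w) ^+ 2) <= (size s)%:R * G.
Proof.
move=> s_uniq; under eq_fun do rewrite expr2 big_distrlr /=.
rewrite Ex_sum => [|i]; last by apply: P_integrable_sum => j; exact: P_integrable_mul.
rewrite -sum1_size natr_sum mulr_suml; apply: ler_sum => i _; rewrite mul1r.
rewrite Ex_sum => [|j]; last exact: P_integrable_mul.
under eq_bigr do rewrite Ex_mul_acov.
apply: (le_trans (ler_norm _)); apply: (le_trans (ler_norm_sum _ _ _)).
rewrite -(big_map (fun j : nat => j%:Z - i%:Z) xpredT (fun k => `|acov P Y k|)).
by apply: sum_abs_acov_le; rewrite map_inj_uniq // => j k /addIr [].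
Qed.

Lemma P_integrable_window_sqr (n Q m : nat) :
  P_integrable (fun w => window_sum (zero_pad (Y^~ w) n Q) Q m ^+ 2).
Proof.
under eq_fun do rewrite window_sum_zero_pad.
exact: P_integrable_sqr_sum.
Qed.

Lemma P_integrable_mean_sqr (n : nat) : P_integrable (fun w => Xbar (fun=> Y) n w ^+ 2).
Proof.
under eq_fun do rewrite /Xbar exprMn.
exact/P_integrableZ/P_integrable_sqr_sum.
Qed.

Lemma P_integrable_s2_dominant (q : nat -> nat) (n : nat) : P_integrable (s2_dominant Y q n).
Proof.
apply: P_integrableD; apply: P_integrableZ; last exact: P_integrable_mean_sqr.
by apply/P_integrableZ/P_integrable_sum => m; exact: P_integrable_window_sqr.
Qed.

Lemma Ex_window_sqr_le (n Q m : nat) :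
  Ex P (fun w => window_sum (zero_pad (Y^~ w) n Q) Q m ^+ 2) <= (Q.+1)%:R * G.
Proof.
under eq_fun do rewrite window_sum_zero_pad.
apply: (le_trans (Ex_sqr_sum_le (window_support_uniq n Q m))).
by rewrite ler_wpM2r ?G_ge0 // ler_nat size_window_support.
Qed.

Lemma Ex_mean_sqr_le (n : nat) : (0 < n)%N ->
  Ex P (fun w => Xbar (fun=> Y) n w ^+ 2) <= n%:R^-1 * G.
Proof.
move=> n_gt0; under eq_fun do rewrite /Xbar exprMn.
rewrite ExZ ?P_integrable_sqr_sum //.
apply: (le_trans (ler_wpM2l _ (Ex_sqr_sum_le (iota_uniq _ _)))).
  by rewrite exprn_ge0 // invr_ge0.
by rewrite size_iota subn1 expr2 -mulrA mulKf ?gt_eqF ?ltr0n.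
Qed.

Lemma Ex_s2_dominant_le (q : nat -> nat) (n : nat) : (0 < n)%N -> (q n <= n)%N ->
  Ex P (s2_dominant Y q n) <= 20 * G.
Proof.
move=> n_gt0 Qn; set Q := q n.
have int_windows : P_integrable (fun w =>
    \sum_(0 <= m < n + Q) window_sum (zero_pad (Y^~ w) n Q) Q m ^+ 2).
  by apply: P_integrable_sum => m; exact: P_integrable_window_sqr.
rewrite /s2_dominant -/Q ExD; [|by do 2 apply: P_integrableZ
                              |by apply: P_integrableZ; exact: P_integrable_mean_sqr].
rewrite ExZ; last exact: P_integrable_mean_sqr.
rewrite (ExZ 2); last exact: P_integrableZ.
rewrite ExZ // Ex_sum => [|m]; last exact: P_integrable_window_sqr.
have windows_le : (n%:R * (Q.+1)%:R)^-1 * \sum_(0 <= m < n + Q)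
    Ex P (fun w => window_sum (zero_pad (Y^~ w) n Q) Q m ^+ 2) <= 2 * G.
  rewrite ler_pdivrMl ?mulr_gt0 ?ltr0n //.
  apply: (le_trans (ler_sum _ (fun m _ => Ex_window_sqr_le n Q m))).
  have -> : n%:R * Q.+1%:R * (2 * G) = (n * Q.+1 * 2)%:R * G :> R by rewrite !natrM mulrA.
  rewrite sumr_const_nat subn0 -[_ *+ (n + Q)]mulr_natr mulrAC -natrM.
  by apply: ler_wpM2r; [exact: G_ge0 | rewrite ler_nat; nia].
have mean_le : (Q.+1)%:R * Ex P (fun w => Xbar (fun=> Y) n w ^+ 2) <= 2 * G.
  apply: (le_trans (ler_wpM2l _ (Ex_mean_sqr_le n_gt0))) => //.
  rewrite mulrA; apply: ler_wpM2r; first exact: G_ge0.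
  by rewrite ler_pdivrMr ?ltr0n // -natrM ler_nat; lia.
rewrite -mulrA; apply: (le_trans (lerD (ler_wpM2l _ windows_le) (ler_wpM2l _ mean_le))) => //.
lra.
Qed.

End summable_autocovariance.

Section change_point_model.
Context d (T : measurableType d) (R : realType).
Variables (mu theta : R) (Delta : nat -> R) (Y : nat -> T -> R).

Lemma Xcp_sub_le (n i : nat) (w : T) :
  `|Xcp mu Delta theta Y n i w - mu - Y i w| <= `|Delta n|.
Proof.
rewrite /Xcp; case: ifP => _.
  have -> : mu + Y i w - mu - Y i w = 0 by ring.
  by rewrite normr0.
by have -> : mu + Delta n + Y i w - mu - Y i w = Delta n by ring.
Qed.

Lemma measurable_Xcp (n i : nat) : (forall k, measurable_fun setT (Y k)) ->
  measurable_fun setT (Xcp mu Delta theta Y n i).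
Proof. by move=> mY; rewrite /Xcp; case: (i <= kstar theta n)%N; exact: measurable_funD. Qed.

End change_point_model.

Lemma measurable_s2 d (T : measurableType d) (R : realType) (X : nat -> nat -> T -> R)
  (q : nat -> nat) (n : nat) :
  (forall i, measurable_fun setT (X n i)) -> measurable_fun setT (s2 X q n).
Proof.
move=> mX.
have mXbar : measurable_fun setT (Xbar X n) by apply: measurable_funM => //; exact: measurable_sum.
have mgammahat j : measurable_fun setT (gammahat X n j).
  apply: measurable_funM => //; apply: measurable_sum => i.
  by apply: measurable_funM; exact: measurable_funB.
apply: measurable_funD => //; apply: measurable_funM => //.
by apply: measurable_sum => j; exact: measurable_funM.
Qed.

Theorem propositionD1 (d : measure_display) (T : measurableType d) (R : realType)
  (P : probability T R) (Y : nat -> T -> R) (mu theta : R) (Delta : nat -> R)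
  (q : nat -> nat) :
  fourth_order_stationary P Y ->
  (forall k, Ex P (Y k) = 0) ->
  fclt P Y ->
  (\esum_(j in [set: int]) (`|acov P Y j|)%:E < +oo)%E ->
  (exists C : R, forall h : int,
     (\esum_(rs in [set: int * int]) (`|kappa P Y h rs.1 rs.2|)%:E <= C%:E)%E) ->
  0 < theta < 1 ->
  (fun n => n%:R * Delta n ^+ 2) @ \oo --> +oo ->
  bounded_in_prob P (fun n w =>
    Delta n ^+ 2 * `|(khat (Xcp mu Delta theta Y) n w)%:R - (kstar theta n)%:R|) ->
  (exists C : R, exists N : nat, forall n, (N <= n)%N -> `|(q n)%:R * Delta n ^+ 2| <= C) ->
  (forall n, (0 < q n)%N) ->
  (fun n => (q n)%:R : R) @ \oo --> +oo ->
  (fun n => (q n)%:R / n%:R : R) @ \oo --> (0 : R) ->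
  bounded_in_prob P (s2 (Xcp mu Delta theta Y) q).
Proof.
move=> Y_stat Y_centred _ acov_summable _ _ _ _ [C [N qDelta_le]] q_gt0 _ q_over_n.
have [mY _ _] := Y_stat.
apply: (bounded_in_prob_dominated (Z := s2_dominant Y q) (c := 64 * C)
  (B := 20 * fine (\esum_(j in [set: int]) (`|acov P Y j|)%:E)%E)).
- by move=> n; apply: measurable_s2 => i; exact: measurable_Xcp.
- exact: P_integrable_s2_dominant.
- exact: s2_dominant_ge0.
have q_lt_n := cvgr_lt 0 q_over_n 1 ltr01.
near=> n.
have n_gt0 : (0 < n)%N by near: n; exists 1%N.
have Qn : (q n <= n)%N.
  have : (q n)%:R / n%:R < 1 :> R by near: n; exact: q_lt_n.
  by rewrite ltr_pdivrMr ?ltr0n // mul1r ltr_nat => /ltnW.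
split; first exact: Ex_s2_dominant_le.
move=> w; rewrite ger0_norm ?s2_ge0 //.
have Qn' : (0 < q n <= n)%N by rewrite q_gt0.
apply: (le_trans (s2_le_dominant Qn' (Xcp_sub_le mu theta Delta Y n ^~ w))).
rewrite lerD2l ler_pM2l // real_normK ?num_real //.
apply: le_trans (ler_norm _) (qDelta_le n _).
by near: n; exists N.
Unshelve. all: by end_near.
Qed.
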